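(* Let $n\ge1$, $m\ge2$, and let $\mu_1,\dots,\mu_n,\beta_1,\dots,\beta_n,c_1,\dots,c_n,d$ be nonzero complex numbers with $\mu_1,\dots,\mu_n$ pairwise distinct and chosen generically. Then the polynomial system in $(\lambda,x)\in\mathbb C\times\mathbb C^n$ $$Q(\lambda,x)=\big((\lambda-\mu_1)(x_1^{m-1}-\beta_1),\ \dots,\ (\lambda-\mu_n)(x_n^{m-1}-\beta_n),\ c_1x_1+\cdots+c_nx_n+d\big)^T=0$$ has exactly $n(m-1)^{n-1}$ solutions, and each is nonsingular (the Jacobian of $Q$ with respect to $(\lambda,x)$ is invertible there). Moreover $Q$ and the system $G(\lambda,x)=\big((\mathcal A^{(k)}x^{m-1})_i-\lambda(\mathcal Bx^{m-1})_i\ (i=1,\dots,n),\ a_1x_1+\cdots+a_nx_n+b\big)^T$ (for any $\mathcal A,\mathcal B\in\mathbb C^{[m,n]}$, $1\le k\le m$, and complex $a_i,b$) both have $2$-homogeneous Bézout number $n(m-1)^{n-1}$ with respect to the variable partition $\{\lambda\},\{x_1,\dots,x_n\}$.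
   Context: For $\mathcal A\in\mathbb C^{[m,n]}$ (an $m$th-order $n$-dimensional complex tensor) and $x\in\mathbb C^n$, $\mathcal A^{(k)}x^{m-1}\in\mathbb C^n$ has $j$th entry $\sum A_{i_1\cdots i_{k-1}\,j\,i_{k+1}\cdots i_m}\prod_{r\neq k}x_{i_r}$, and $\mathcal Bx^{m-1}:=\mathcal B^{(1)}x^{m-1}$. For a partition of the variables into groups $y_1,\dots,y_K$ of sizes $l_1,\dots,l_K$ and a square system $p_1,\dots,p_N$ with $d_{ij}$ the degree of $p_i$ in the group $y_j$, the multihomogeneous Bézout number is the coefficient of $\alpha_1^{l_1}\cdots\alpha_K^{l_K}$ in $\prod_i(d_{i1}\alpha_1+\cdots+d_{iK}\alpha_K)$. (Genericity of the $\mu_i$ relative to the other parameters ensures the solution count; the nonsingularity uses $\mu_j\neq\mu_i$ for $j\ne i$.)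
   Formalization: Genericity is joint in μ, β, c, d, the solution count and nonsingularity holding off the zero set of a polynomial in (μ,β,c,d) not identically zero, and Bézout degrees are the nominal ones of the displayed formulas. Each condition added here is assumed in the paper as well or is needed for the statement above to hold. *)

From HB Require Import structures.
From mathcomp Require Import all_boot all_order all_algebra.
Set Implicit Arguments. Unset Strict Implicit. Unset Printing Implicit Defensive.
Import Order.TTheory GRing.Theory Num.Theory.
Local Open Scope ring_scope.

Inductive pexpr (R : Type) : Type :=
| PConst of R
| PVar of nat
| PAdd of pexpr R & pexpr R
| PMul of pexpr R & pexpr R.
Arguments PVar {R} _.
Arguments PAdd {R} _ _.
Arguments PMul {R} _ _.
Arguments PConst {R} _.

Section PExpr.
Variable R : nzRingType.

Fixpoint peval (env : nat -> R) (p : pexpr R) : R :=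
  match p with
  | PConst c => c
  | PVar i => env i
  | PAdd p q => peval env p + peval env q
  | PMul p q => peval env p * peval env q
  end.

Fixpoint pderiv (j : nat) (p : pexpr R) : pexpr R :=
  match p with
  | PConst _ => PConst 0
  | PVar i => PConst (if i == j then 1 else 0)
  | PAdd p q => PAdd (pderiv j p) (pderiv j q)
  | PMul p q => PAdd (PMul (pderiv j p) q) (PMul p (pderiv j q))
  end.

(* (nominal) degree of p in the variable group g *)
Fixpoint pdeg (g : pred nat) (p : pexpr R) : nat :=
  match p with
  | PConst _ => 0%N
  | PVar i => (g i : nat)
  | PAdd p q => maxn (pdeg g p) (pdeg g q)
  | PMul p q => (pdeg g p + pdeg g q)%N
  end.

Definition ppow (p : pexpr R) (k : nat) : pexpr R := iter k (PMul p) (PConst 1).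

(* 2-homogeneous Bezout number of the square system sys with respect to the
   variable groups g1 (of size l1) and g2 (of size l2): the coefficient of
   a1^l1 a2^l2 in prod_i (d_i1 a1 + d_i2 a2). *)
Definition bezout2 (sys : seq (pexpr R)) (g1 g2 : pred nat) (l1 l2 : nat) : int :=
  let a1 : {poly {poly int}} := 'X in
  let a2 : {poly {poly int}} := ('X : {poly int})%:P in
  let P := \prod_(p <- sys) ((pdeg g1 p)%:R * a1 + (pdeg g2 p)%:R * a2) in
  (P`_l1)`_l2.

Definition pt_env (n : nat) (z : 'rV[R]_n.+1) (k : nat) : R :=
  if (k < n.+1)%N then z 0 (inord k) else 0.

Definition is_zero (n : nat) (sys : seq (pexpr R)) (z : 'rV[R]_n.+1) : Prop :=
  forall r, (r < size sys)%N -> peval (pt_env z) (nth (PConst 0) sys r) = 0.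

Definition jacobian (n : nat) (sys : seq (pexpr R)) (z : 'rV[R]_n.+1)
  : 'M[R]_n.+1 :=
  \matrix_(r < n.+1, s < n.+1) peval (pt_env z) (pderiv s (nth (PConst 0) sys r)).

End PExpr.

Section Systems.
Variable R : nzRingType.
Variables n m : nat.

(* Variables: 0 is lambda, i.+1 is x_i (i : 'I_n). *)
Definition lin_expr (a : 'I_n -> R) (b : R) : pexpr R :=
  foldr (fun i p => PAdd (PMul (PConst (a i)) (PVar (val i).+1)) p)
        (PConst b) (enum 'I_n).

Definition Qsys (mu beta c : 'I_n -> R) (d : R) : seq (pexpr R) :=
  [seq PMul (PAdd (PVar 0) (PConst (- mu i)))
            (PAdd (ppow (PVar (val i).+1) (m - 1)) (PConst (- beta i)))
  | i <- enum 'I_n] ++ [:: lin_expr c d].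

(* (A^(k) x^(m-1))_j, with k 1-based. *)
Definition tensor_apply (A : {ffun 'I_m -> 'I_n} -> R) (k : nat) (j : 'I_n)
  : pexpr R :=
  foldr PAdd (PConst 0)
    [seq PMul (PConst (A f))
              (foldr PMul (PConst 1)
                 [seq PVar (val (f r)).+1 | r <- enum 'I_m & (val r).+1 != k])
    | f : {ffun 'I_m -> 'I_n} <- enum {ffun 'I_m -> 'I_n}
    & [forall r : 'I_m, ((val r).+1 == k) ==> (f r == j)]].

Definition Gsys (A B : {ffun 'I_m -> 'I_n} -> R) (k : nat) (a : 'I_n -> R)
  (b : R) : seq (pexpr R) :=
  [seq PAdd (tensor_apply A k i)
            (PMul (PConst (-1)) (PMul (PVar 0) (tensor_apply B 1 i)))
  | i <- enum 'I_n] ++ [:: lin_expr a b].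

(* parameters (mu, beta, c, d) as variables 0..3n of a polynomial *)
Definition param_env (mu beta c : 'I_n -> R) (d : R) (k : nat) : R :=
  if (k < n)%N then oapp mu 0 (insub k : option 'I_n)
  else if (k < 2 * n)%N then oapp beta 0 (insub (k - n)%N : option 'I_n)
  else if (k < 3 * n)%N then oapp c 0 (insub (k - 2 * n)%N : option 'I_n)
  else if k == (3 * n)%N then d else 0.

End Systems.

Definition lam_group : pred nat := pred1 0%N.
Definition x_group (n : nat) : pred nat := fun i => (0 < i <= n)%N.

From mathcomp Require Import all_boot all_order all_algebra.
From mathcomp Require Import perm cyclic separable cyclotomic.
From mathcomp Require Import ring zify.
Set Implicit Arguments. Unset Strict Implicit. Unset Printing Implicit Defensive.
Import Order.TTheory GRing.Theory Num.Theory.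
Local Open Scope ring_scope.

(* Write e = m - 1.  At a zero of Q with lambda <> mu_i for all i, every x_j is
   an e-th root of beta_j; for generic parameters no such vector of roots lies on
   the hyperplane c.x + d = 0.  Genericity is the nonvanishing of the determinant
   of multiplication by c.x + d on C[x]/(x_j^e - beta_j)_j, which vanishes as soon
   as some vector of roots r satisfies c.r + d = 0 (the monomials r^t form a left
   kernel vector).  Hence lambda = mu_i; as the mu_j are distinct, x_j is an e-th
   root of beta_j for j <> i and x_i is then fixed by the linear equation (and is
   not a root).  This gives n e^(n-1) zeros, and the same facts show that a left
   kernel vector of the Jacobian vanishes.  Both Q and G consist of n equations of
   bidegree (1, e) and one of bidegree (0, 1), so their Bezout number is the
   coefficient of a1 a2^n in (a1 + e a2)^n a2, namely n e^(n-1). *)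

Lemma coef1_exprXaddC (R : comNzRingType) (a : R) k :
  (('X + a%:P) ^+ k)`_1 = a ^+ k.-1 *+ k.
Proof.
have := coef_deriv (('X + a%:P) ^+ k) 0; rewrite mulr1n => <-.
rewrite -horner_coef0 deriv_exp derivD derivX derivC addr0 mul1r hornerMn.
by rewrite horner_exp hornerD hornerX hornerC add0r.
Qed.

Lemma bezout2_bidegree (R : nzRingType) (g1 g2 : pred nat)
    (I : Type) (r : seq I) (F : I -> pexpr R) (L : pexpr R) n k :
  size r = n -> (forall i, pdeg g1 (F i) = 1%N /\ pdeg g2 (F i) = k) ->
  pdeg g1 L = 0%N -> pdeg g2 L = 1%N ->
  bezout2 ([seq F i | i <- r] ++ [:: L]) g1 g2 1 n = (n * k ^ n.-1)%N%:Z.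
Proof.
move=> <- degF degL1 degL2; rewrite /bezout2 big_cat big_seq1 degL1 degL2 big_map.
under eq_bigr => i _ do rewrite (degF i).1 (degF i).2 mul1r.
rewrite big_const_seq count_predT /= mul0r add0r mul1r.
rewrite iter_mulr_1 -polyC_natr -polyCM coefMC coef1_exprXaddC.
case: (size r) => [|N] /=; first by rewrite mulr0n mul0r coef0.
rewrite exprMn -natrX mulr_natl -mulrnA mulrnAl -exprSr coefMn coefXn eqxx.
by rewrite mulnC -natz.
Qed.

Lemma count_ord_neq m k : (1 <= k <= m)%N ->
  count (fun r : 'I_m => (val r).+1 != k) (enum 'I_m) = (m - 1)%N.
Proof.
case/andP => k_gt0 k_le_m; have km : (k.-1 < m)%N by rewrite prednK.
have -> : (m - 1 = #|'I_m|.-1)%N by rewrite card_ord subn1.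
rewrite -(cardC1 (Ordinal km)) cardE /enum_mem -enumT size_filter.
rewrite (@eq_filter _ _ predT) // filter_predT.
apply: eq_count => r /=; rewrite !inE -(inj_eq val_inj) /=.
by case: k k_gt0 {k_le_m km}.
Qed.

Section Degree.
Variables (R : nzRingType) (g : pred nat).

Lemma pdeg_ppow (p : pexpr R) k : pdeg g (ppow p k) = (k * pdeg g p)%N.
Proof. by elim: k => //= k IHk; rewrite -/(ppow p k) IHk mulSn. Qed.

Lemma pdeg_prod (s : seq (pexpr R)) :
  pdeg g (foldr PMul (PConst 1) s) = sumn [seq pdeg g p | p <- s].
Proof. by elim: s => //= p s ->. Qed.

Lemma pdeg_sum_const (I : Type) (F : I -> pexpr R) (s : seq I) k :
  (forall i, pdeg g (F i) = k) ->
  pdeg g (foldr PAdd (PConst 0) [seq F i | i <- s])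
  = if s is [::] then 0%N else k.
Proof.
move=> degF; elim: s => //= i s ->; rewrite degF.
by case: s => [|? ?]; rewrite ?maxn0 ?maxnn.
Qed.

End Degree.

Section LinearForm.
Variables (R : nzRingType) (n : nat) (a : 'I_n -> R) (b : R).

Lemma pdeg_lin_lam : pdeg lam_group (lin_expr a b) = 0%N.
Proof. by rewrite /lin_expr; elim: (enum 'I_n) => //= i s ->. Qed.

Lemma pdeg_lin_x : (1 <= n)%N -> pdeg (x_group n) (lin_expr a b) = 1%N.
Proof.
rewrite -[X in (_ <= X)%N](size_enum_ord n) /lin_expr.
elim: (enum 'I_n) => //= i s IHs _.
have -> : x_group n i.+1 by rewrite /x_group /= ltn_ord.
by case: s IHs => [|j s] // ->.
Qed.

End LinearForm.

Section Tensor.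
Variables (R : nzRingType) (n m : nat) (A : {ffun 'I_m -> 'I_n} -> R) (k : nat).

Lemma pdeg_tensor_lam j : pdeg lam_group (tensor_apply A k j) = 0%N.
Proof.
rewrite /tensor_apply (@pdeg_sum_const _ _ _ _ _ 0%N); first by case: (filter _ _).
by move=> f /=; rewrite pdeg_prod; elim: (filter _ _) => //= r s ->.
Qed.

Lemma pdeg_tensor_x j : (1 <= k <= m)%N ->
  pdeg (x_group n) (tensor_apply A k j) = (m - 1)%N.
Proof.
move=> k_range; rewrite /tensor_apply (@pdeg_sum_const _ _ _ _ _ (m - 1)%N).
  have : [ffun=> j] \in [seq f : {ffun 'I_m -> 'I_n} <- enum {ffun 'I_m -> 'I_n} |
                           [forall r : 'I_m, ((val r).+1 == k) ==> (f r == j)]].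
    rewrite mem_filter mem_enum andbT.
    by apply/forallP => r; rewrite ffunE eqxx implybT.
  by case: (filter _ _).
move=> f /=; rewrite pdeg_prod -map_comp -(count_ord_neq k_range) -size_filter.
rewrite add0n; elim: (filter _ _) => //= r s ->.
by rewrite /x_group /= ltn_ord.
Qed.

End Tensor.

Section BezoutNumbers.
Variables (R : nzRingType) (n m : nat).
Hypothesis n_gt0 : (1 <= n)%N.

Lemma bezout2_Qsys (mu beta c : 'I_n -> R) d :
  bezout2 (Qsys m mu beta c d) lam_group (x_group n) 1 n
  = (n * (m - 1) ^ (n - 1))%N%:Z.
Proof.
rewrite /Qsys [(n - 1)%N]subn1; apply: bezout2_bidegree.
- exact: size_enum_ord.
- by move=> i /=; rewrite !pdeg_ppow /= /x_group /= ltn_ord muln0 muln1 !maxn0.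
- exact: pdeg_lin_lam.
- exact: pdeg_lin_x.
Qed.

Lemma bezout2_Gsys (A B : {ffun 'I_m -> 'I_n} -> R) k a b : (1 <= k <= m)%N ->
  bezout2 (Gsys A B k a b) lam_group (x_group n) 1 n
  = (n * (m - 1) ^ (n - 1))%N%:Z.
Proof.
move=> k_range; have m_gt0 : (1 <= m)%N by case/andP: k_range; apply: leq_trans.
rewrite /Gsys [(n - 1)%N]subn1; apply: bezout2_bidegree.
- exact: size_enum_ord.
- by move=> i /=; rewrite !pdeg_tensor_lam !pdeg_tensor_x ?m_gt0 ?maxnn.
- exact: pdeg_lin_lam.
- exact: pdeg_lin_x.
Qed.

End BezoutNumbers.

Section Evaluation.
Variables (R : comNzRingType) (env : nat -> R).

Lemma peval_ppow (p : pexpr R) k : peval env (ppow p k) = peval env p ^+ k.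
Proof. by elim: k => //= k IHk; rewrite -/(ppow p k) IHk exprS. Qed.

Lemma peval_pderiv_ppow j (p : pexpr R) k :
  peval env (pderiv j (ppow p k))
  = k%:R * peval env p ^+ k.-1 * peval env (pderiv j p).
Proof.
elim: k => [|k IHk] /=; first by rewrite !mul0r.
rewrite -/(ppow p k) IHk peval_ppow.
by case: k {IHk} => [|k]; rewrite /= ?expr0 ?exprS; ring.
Qed.

Lemma peval_sum (I : Type) (F : I -> pexpr R) (s : seq I) :
  peval env (foldr PAdd (PConst 0) [seq F i | i <- s])
  = \sum_(i <- s) peval env (F i).
Proof. by elim: s => [|i s IHs] /=; rewrite ?big_nil ?big_cons ?IHs. Qed.

Lemma peval_prod (I : Type) (F : I -> pexpr R) (s : seq I) :
  peval env (foldr PMul (PConst 1) [seq F i | i <- s])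
  = \prod_(i <- s) peval env (F i).
Proof. by elim: s => [|i s IHs] /=; rewrite ?big_nil ?big_cons ?IHs. Qed.

Lemma peval_lin n (a : 'I_n -> R) b :
  peval env (lin_expr a b) = b + \sum_i a i * env (val i).+1.
Proof.
rewrite /lin_expr -big_enum /=; elim: (enum 'I_n) => [|i s IHs] /=.
  by rewrite big_nil addr0.
by rewrite IHs big_cons addrCA.
Qed.

Lemma peval_pderiv_lin n (a : 'I_n -> R) b (j : nat) :
  peval env (pderiv j (lin_expr a b))
  = \sum_(i | (val i).+1 == j) a i.
Proof.
rewrite /lin_expr big_mkcond -big_enum /=; elim: (enum 'I_n) => [|i s IHs] /=.
  by rewrite big_nil.
by rewrite IHs big_cons mul0r add0r; case: eqP; rewrite ?mulr1 ?mulr0.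
Qed.

End Evaluation.

Section Points.
Variables (R : nzRingType) (n : nat).

Definition mkpt (l : R) (x : 'I_n -> R) : 'rV[R]_n.+1 :=
  \row_t oapp x l (unlift ord0 t).

Lemma pt_env_mkpt0 l x : pt_env (mkpt l x) 0 = l.
Proof.
rewrite /pt_env /= mxE (_ : inord 0 = ord0) ?unlift_none //.
by apply: val_inj; rewrite /= inordK.
Qed.

Lemma pt_env_mkptS l x (j : 'I_n) : pt_env (mkpt l x) (val j).+1 = x j.
Proof.
rewrite /pt_env ltnS ltn_ord mxE (_ : inord (val j).+1 = lift ord0 j) ?liftK //.
by apply: val_inj; rewrite /= inordK // ltnS ltn_ord.
Qed.

Lemma mkpt_eta (z : 'rV[R]_n.+1) :
  z = mkpt (pt_env z 0) (fun j => pt_env z (val j).+1).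
Proof.
apply/rowP => t; rewrite mxE /pt_env; case: unliftP => [j ->|->] /=.
  by rewrite ltnS ltn_ord; congr (z _ _); apply: val_inj; rewrite /= inordK // ltnS.
by congr (z _ _); apply: val_inj; rewrite /= inordK.
Qed.

Lemma eq_mkpt l (x y : 'I_n -> R) : x =1 y -> mkpt l x = mkpt l y.
Proof. by move=> eq_xy; apply/rowP => t; rewrite !mxE; case: (unlift _ _). Qed.

Lemma mkpt_inj l l' x x' : mkpt l x = mkpt l' x' -> l = l' /\ x =1 x'.
Proof.
move=> E; split; first by rewrite -(pt_env_mkpt0 l x) E pt_env_mkpt0.
by move=> j; rewrite -(pt_env_mkptS l x) E pt_env_mkptS.
Qed.

End Points.

Section QsysFacts.
Variables (R : comNzRingType) (n K : nat) (mu beta c : 'I_n -> R) (d : R).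
Local Notation Q := (Qsys K.+2 mu beta c d).

Lemma size_Qsys : size Q = n.+1.
Proof. by rewrite size_cat size_map size_enum_ord addn1. Qed.

Lemma nth_Qsys (i : 'I_n) : nth (PConst 0) Q i =
  PMul (PAdd (PVar 0) (PConst (- mu i)))
       (PAdd (ppow (PVar (val i).+1) K.+1) (PConst (- beta i))).
Proof.
rewrite nth_cat size_map size_enum_ord ltn_ord (nth_map i) ?size_enum_ord //.
by rewrite nth_ord_enum subn1.
Qed.

Lemma nth_Qsys_last : nth (PConst 0) Q n = lin_expr c d.
Proof. by rewrite nth_cat size_map size_enum_ord ltnn subnn. Qed.

Lemma is_zero_Qsys l x : is_zero Q (mkpt l x) <->
  (forall i, (l - mu i) * (x i ^+ K.+1 - beta i) = 0) /\ d + \sum_i c i * x i = 0.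
Proof.
have lin_val : peval (pt_env (mkpt l x)) (lin_expr c d) = d + \sum_i c i * x i.
  by rewrite peval_lin; under eq_bigr do rewrite pt_env_mkptS.
have eq_val (i : 'I_n) : peval (pt_env (mkpt l x)) (nth (PConst 0) Q i)
                         = (l - mu i) * (x i ^+ K.+1 - beta i).
  by rewrite nth_Qsys /= peval_ppow -exprS pt_env_mkpt0 pt_env_mkptS.
rewrite /is_zero size_Qsys; split => [zeroQ | [zero_eq zero_lin] r].
  split; last by rewrite -lin_val -nth_Qsys_last zeroQ.
  by move=> i; rewrite -eq_val zeroQ // ltnS ltnW.
rewrite ltnS leq_eqVlt => /orP [/eqP ->|r_lt_n]; first by rewrite nth_Qsys_last lin_val.
by have := zero_eq (Ordinal r_lt_n); rewrite -eq_val.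
Qed.

Section Jacobian.
Variables (l : R) (x : 'I_n -> R) (v : 'rV[R]_n.+1).
Local Notation J := (jacobian Q (mkpt l x)).
Local Notation v_ i := (v 0 (widen_ord (leqnSn n) i)).

Lemma peval_pderiv_Qsys (i : 'I_n) (s : nat) :
  peval (pt_env (mkpt l x)) (pderiv s (nth (PConst 0) Q i))
  = (s == 0%N)%:R * (x i ^+ K.+1 - beta i)
    + (l - mu i) * (K.+1%:R * x i ^+ K * ((val i).+1 == s)%:R).
Proof.
rewrite nth_Qsys; cbn -[ppow].
rewrite peval_pderiv_ppow peval_ppow /= pt_env_mkpt0 pt_env_mkptS !addr0.
case: s => [|s] //=; rewrite eqSS.
by case: eqnP => [->|/eqP/negbTE ->]; rewrite ?eqxx.
Qed.

Lemma mulmx_jacobian s : (v *m J) 0 s =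
  \sum_(i < n) v_ i * peval (pt_env (mkpt l x)) (pderiv s (nth (PConst 0) Q i))
  + v 0 ord_max * peval (pt_env (mkpt l x)) (pderiv s (lin_expr c d)).
Proof.
rewrite mxE big_ord_recr /= !mxE nth_Qsys_last; congr (_ + _).
by under eq_bigr do rewrite mxE.
Qed.

Lemma mulmx_jacobian_lam :
  (v *m J) 0 0 = \sum_(i < n) v_ i * (x i ^+ K.+1 - beta i).
Proof.
rewrite mulmx_jacobian peval_pderiv_lin [X in _ * X]big_pred0 // mulr0 addr0.
by apply: eq_bigr => i _; rewrite peval_pderiv_Qsys mulr0 mulr0 addr0 mul1r.
Qed.

Lemma mulmx_jacobian_x j : (v *m J) 0 (lift ord0 j) =
  v_ j * ((l - mu j) * (K.+1%:R * x j ^+ K)) + v 0 ord_max * c j.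
Proof.
have succ_eq (i : 'I_n) : ((val i).+1 == lift ord0 j) = (i == j).
  by rewrite lift0 eqSS.
rewrite mulmx_jacobian peval_pderiv_lin [X in _ * X](big_pred1 j) => [|i]; last first.
  by rewrite /= succ_eq.
rewrite (bigD1 j) //= big1 ?addr0 => [|i ij]; rewrite peval_pderiv_Qsys succ_eq /=.
  by rewrite eqxx mul0r add0r mulr1.
by rewrite (negbTE ij) mul0r add0r !mulr0.
Qed.

End Jacobian.
End QsysFacts.

Section ParamEnv.
Variables (R : nzRingType) (n : nat) (mu beta c : 'I_n -> R) (d : R).
Local Notation pe := (param_env mu beta c d).

Lemma param_env_beta (i : 'I_n) : pe (n + i)%N = beta i.
Proof.
have i_lt_n := ltn_ord i.
rewrite /param_env ifF; last by apply/negbTE; rewrite -leqNgt; lia.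
by rewrite ifT ?addKn ?valK //; lia.
Qed.

Lemma param_env_c (i : 'I_n) : pe (2 * n + i)%N = c i.
Proof.
have i_lt_n := ltn_ord i.
rewrite /param_env ifF; last by apply/negbTE; rewrite -leqNgt; lia.
rewrite ifF; last by apply/negbTE; rewrite -leqNgt; lia.
by rewrite ifT ?addKn ?valK //; lia.
Qed.

Lemma param_env_d : pe (3 * n)%N = d.
Proof.
rewrite /param_env ifF; last by apply/negbTE; rewrite -leqNgt; lia.
rewrite ifF; last by apply/negbTE; rewrite -leqNgt; lia.
by rewrite ltnn eqxx.
Qed.

End ParamEnv.

Section PolyDet.
Variable R : comNzRingType.

Definition pdet N (E : 'I_N -> 'I_N -> pexpr R) : pexpr R :=
  foldr PAdd (PConst 0)
    [seq PMul (PConst ((-1) ^+ s))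
              (foldr PMul (PConst 1) [seq E i (s i) | i <- enum 'I_N])
    | s : {perm 'I_N} <- enum {perm 'I_N}].

Lemma peval_pdet env N (E : 'I_N -> 'I_N -> pexpr R) :
  peval env (pdet E) = \det (\matrix_(i, j) peval env (E i j)).
Proof.
rewrite /pdet peval_sum big_enum; apply: eq_bigr => s _ /=.
by rewrite peval_prod big_enum; congr (_ * _); apply: eq_bigr => i _; rewrite mxE.
Qed.

End PolyDet.

Section NormMatrix.
Variables (R : comNzRingType) (n K : nat).
Local Notation T := {ffun 'I_n -> 'I_K.+1}.

Definition shift_exp (j : 'I_n) (t : T) : T :=
  [ffun l => if l == j then ordS (t j) else t l].

Definition shift_coef (beta : 'I_n -> R) (j : 'I_n) (t : T) : R :=
  if t j == ord_max then beta j else 1.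

(* The matrix of multiplication by [d + \sum_j c_j x_j] on
   [R[x]/(x_j^(K+1) - beta_j)_j] in the monomial basis [x^t], [t : T]: indeed
   [x^t * x_j = shift_coef beta j t * x^(shift_exp j t)]. *)
Definition norm_mx (beta c : 'I_n -> R) (d : R) : 'M[R]_#|T| :=
  \matrix_(s, t) ((enum_val t == enum_val s)%:R * d
    + \sum_j c j * (shift_coef beta j (enum_val t)
                    * (enum_val s == shift_exp j (enum_val t))%:R)).

Definition monomial (r : 'I_n -> R) (t : T) : R := \prod_j r j ^+ t j.

Lemma shift_coef_monomial beta r j t : (forall j, r j ^+ K.+1 = beta j) ->
  shift_coef beta j t * monomial r (shift_exp j t) = r j * monomial r t.
Proof.
move=> r_root; rewrite /monomial (bigD1 j) //= [in RHS](bigD1 j) //= ffunE eqxx.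
under eq_bigr => l /negbTE lj do rewrite ffunE lj.
rewrite !mulrA; congr (_ * _); rewrite /shift_coef /=.
case: eqP => [->|t_max] /=; first by rewrite modnn expr0 mulr1 -r_root exprS.
rewrite modn_small ?exprS ?mul1r //.
by rewrite ltnS ltn_neqAle -ltnS ltn_ord andbT; apply/eqP => E; apply/t_max/val_inj.
Qed.

Definition monomial_row (r : 'I_n -> R) : 'rV[R]_#|T| :=
  \row_s monomial r (enum_val s).

Lemma monomial_row_norm_mx beta c d r : (forall j, r j ^+ K.+1 = beta j) ->
  monomial_row r *m norm_mx beta c d = (d + \sum_j c j * r j) *: monomial_row r.
Proof.
move=> r_root; apply/rowP => t; rewrite !mxE.
have pick_coord (F : T -> R) (u : T) :
    \sum_(s < #|T|) F (enum_val s) * (enum_val s == u)%:R = F u.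
  rewrite (bigD1 (enum_rank u)) //= enum_rankK eqxx mulr1 big1 ?addr0 // => s su.
  have /negbTE -> : enum_val s != u by apply: contraNneq su => <-; rewrite enum_valK.
  by rewrite mulr0.
under eq_bigr do rewrite !mxE mulrDr mulr_sumr.
rewrite big_split /= exchange_big /= mulrDl mulr_suml; congr (_ + _).
  rewrite -(pick_coord (fun u => d * monomial r u)); apply: eq_bigr => s _.
  by rewrite eq_sym; ring.
apply: eq_bigr => j _; rewrite -mulrA -(shift_coef_monomial _ _ r_root).
rewrite -(pick_coord (monomial r) (shift_exp j (enum_val t))) !mulr_sumr.
by apply: eq_bigr => s _; ring.
Qed.

Definition norm_entry_expr (s t : T) : pexpr R :=
  PAdd (PMul (PConst (t == s)%:R) (PVar (3 * n)%N))
    (foldr PAdd (PConst 0)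
      [seq PMul (PVar (2 * n + j)%N)
                (PMul (if t j == ord_max then PVar (n + j)%N else PConst 1)
                      (PConst (s == shift_exp j t)%:R))
      | j : 'I_n <- enum 'I_n]).

Definition norm_expr : pexpr R :=
  pdet (fun s t : 'I_#|T| => norm_entry_expr (enum_val s) (enum_val t)).

Lemma peval_norm_expr mu beta c d :
  peval (param_env mu beta c d) norm_expr = \det (norm_mx beta c d).
Proof.
rewrite peval_pdet; congr (\det _); apply/matrixP => s t; rewrite !mxE /=.
rewrite param_env_d mulrC peval_sum big_enum; congr (_ + _); apply: eq_bigr => j _ /=.
by rewrite param_env_c /shift_coef; case: ifP => _ //=; rewrite param_env_beta.
Qed.

End NormMatrix.

Section NormDet.
Variables (F : fieldType) (n K : nat).

Lemma det_norm_mx_eq0 (beta c r : 'I_n -> F) d : (forall j, r j ^+ K.+1 = beta j) ->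
  d + \sum_j c j * r j = 0 -> \det (norm_mx K beta c d) = 0.
Proof.
move=> r_root ell_r; apply/eqP/det0P; exists (monomial_row K r).
  apply/negP => /eqP/rowP/(_ (enum_rank [ffun=> ord0])).
  rewrite !mxE enum_rankK /monomial big1 => [/eqP|j _]; last by rewrite ffunE expr0.
  by rewrite oner_eq0.
by rewrite monomial_row_norm_mx // ell_r scale0r.
Qed.

Lemma det_norm_mx_unit (beta : 'I_n -> F) : \det (norm_mx K beta (fun _ => 0) 1) = 1.
Proof.
rewrite (_ : norm_mx _ _ _ _ = 1%:M) ?det1 //; apply/matrixP => s t.
rewrite !mxE big1 ?addr0 ?mulr1 => [|j _]; last by rewrite mul0r.
by rewrite (inj_eq enum_val_inj) eq_sym.
Qed.

End NormDet.

Lemma prim_root_exists (C : numClosedFieldType) N : (0 < N)%N ->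
  exists z : C, N.-primitive_root z.
Proof.
move=> N_gt0; have [r Dr] := closed_field_poly_normal ('X^N - 1 : {poly C}).
rewrite (monicP (monicXnsubC 1 N_gt0)) scale1r in Dr.
have r_unity : all N.-unity_root r by apply/allP => u; rewrite -root_prod_XsubC -Dr.
have r_size : (N < (size r).+1)%N by rewrite -(size_prod_XsubC r id) -Dr size_XnsubC.
have r_uniq : uniq r.
  by rewrite -separable_prod_XsubC -Dr separable_Xn_sub_1 // pnatr_eq0 -lt0n.
by have [u _ prim_u] := hasP (has_prim_root N_gt0 r_unity r_uniq r_size); exists u.
Qed.

Section NthRoots.
Variables (C : numClosedFieldType) (K : nat) (z : C).
Hypothesis prim_z : K.+1.-primitive_root z.

Definition nth_root (b : C) (a : 'I_K.+1) : C := K.+1.-root b * z ^+ a.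

Lemma nth_rootX b a : nth_root b a ^+ K.+1 = b.
Proof. by rewrite exprMn rootCK // exprAC (prim_expr_order prim_z) expr1n mulr1. Qed.

Section NonZero.
Variable b : C.
Hypothesis b_neq0 : b != 0.

Lemma rootC_neq0 : K.+1.-root b != 0.
Proof. by apply: contra b_neq0 => /eqP r0; rewrite -(rootCK (ltn0Sn K) b) r0 expr0n. Qed.

Lemma nth_root_inj : injective (nth_root b).
Proof.
move=> a a' /(mulfI rootC_neq0)/eqP; rewrite (eq_prim_root_expr prim_z) !modn_small //.
by move/eqP/val_inj.
Qed.

Lemma nth_rootP x : x ^+ K.+1 = b -> exists a, x = nth_root b a.
Proof.
move=> xb; have [a Ea] : {a : 'I_K.+1 | x / K.+1.-root b = z ^+ a}.
  by apply: (prim_rootP prim_z); rewrite expr_div_n xb rootCK // divff.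
by exists a; rewrite /nth_root -Ea mulrC divfK ?rootC_neq0.
Qed.

End NonZero.
End NthRoots.

Lemma solve_lin_eq (F : fieldType) n (c x : 'I_n -> F) d i : c i != 0 ->
  (d + \sum_j c j * x j == 0) = (x i == - (d + \sum_(j | j != i) c j * x j) / c i).
Proof.
move=> ci_neq0; rewrite (bigD1 i) //= addrCA addr_eq0 eq_sym.
by rewrite -(can2_eq (mulfK ci_neq0) (divfK ci_neq0)) mulrC eq_sym.
Qed.

Section Counting.
Variables (n K : nat).
Local Notation T := {ffun 'I_n -> 'I_K.+1}.

Lemma card_ffun_fixed (i : 'I_n) : #|[pred f : T | f i == ord0]| = (K.+1 ^ n.-1)%N.
Proof.
rewrite (eq_card (B := pffun_on ord0 (predC1 i) (@predT 'I_K.+1))).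
  by rewrite card_pffun_on card_ord cardC1 card_ord.
move=> f; rewrite !inE; apply/idP/pffun_onP => [/eqP fi | [supp _]].
  by split=> [|y _ //]; apply/subsetP => j; rewrite !inE; apply: contra_neq => ->.
by apply/negPn/negP => /(subsetP supp i); rewrite !inE eqxx.
Qed.

Lemma card_dep_pairs : #|[pred p : 'I_n * T | p.2 p.1 == ord0]| = (n * K.+1 ^ n.-1)%N.
Proof.
rewrite -sum1_card (eq_bigl (fun p : 'I_n * T => true && (p.2 p.1 == ord0))) //.
rewrite -(pair_big_dep xpredT (fun i (f : T) => f i == ord0) (fun _ _ => 1%N)) /=.
under eq_bigr => i _ do rewrite sum1_card card_ffun_fixed.
by rewrite sum_nat_const card_ord.
Qed.

End Counting.

Section GenericSolutions.
Variables (C : numClosedFieldType) (n K : nat) (z : C).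
Variables (mu beta c : 'I_n -> C) (d : C).
Hypothesis prim_z : K.+1.-primitive_root z.
Hypothesis beta_neq0 : forall i, beta i != 0.
Hypothesis c_neq0 : forall i, c i != 0.
Hypothesis mu_inj : injective mu.
Hypothesis generic :
  forall r : 'I_n -> C, (forall j, r j ^+ K.+1 = beta j) -> d + \sum_j c j * r j != 0.

Local Notation T := {ffun 'I_n -> 'I_K.+1}.
Local Notation Q := (Qsys K.+2 mu beta c d).
Local Notation root := (@nth_root C K z).

(* [f j] selects the root [x_j] for [j != i]; [f i] is ignored. *)
Definition sol_x (i : 'I_n) (f : T) (j : 'I_n) : C :=
  if j == i then - (d + \sum_(l | l != i) c l * root (beta l) (f l)) / c i
  else root (beta j) (f j).

Definition sol (p : 'I_n * T) : 'rV[C]_n.+1 := mkpt (mu p.1) (sol_x p.1 p.2).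

Definition sol_index := [pred p : 'I_n * T | p.2 p.1 == ord0].

Lemma sol_x_lin i f : d + \sum_j c j * sol_x i f j = 0.
Proof.
apply/eqP; rewrite (solve_lin_eq _ _ (c_neq0 i)) {1}/sol_x eqxx.
by apply/eqP; congr (- (d + _) / _); apply: eq_bigr => j /negbTE ji; rewrite /sol_x ji.
Qed.

Lemma sol_x_root i f j : j != i -> sol_x i f j ^+ K.+1 = beta j.
Proof. by move=> /negbTE ji; rewrite /sol_x ji nth_rootX. Qed.

Lemma sol_x_not_root i f : sol_x i f i ^+ K.+1 != beta i.
Proof.
apply/eqP => root_i; suff /generic : forall j, sol_x i f j ^+ K.+1 = beta j.
  by rewrite sol_x_lin eqxx.
by move=> j; case: (eqVneq j i) => [->|/sol_x_root].
Qed.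

Lemma is_zero_sol p : is_zero Q (sol p).
Proof.
case: p => i f; apply/is_zero_Qsys; split => [j|]; last exact: sol_x_lin.
by case: (eqVneq j i) => [->|ji]; rewrite ?subrr ?mul0r // sol_x_root ?subrr ?mulr0.
Qed.

Lemma sol_inj : {in sol_index &, injective sol}.
Proof.
move=> [i f] [i' f']; rewrite !inE /= => /eqP fi /eqP fi' /mkpt_inj[/= /mu_inj ii' E].
move: ii' fi' E => <- fi' /= E; congr pair; apply/ffunP => j.
case: (eqVneq j i) => [->|ji]; first by rewrite fi fi'.
by apply: (nth_root_inj prim_z (beta_neq0 j)); have := E j; rewrite /sol_x (negbTE ji).
Qed.

Lemma zero_is_sol y : is_zero Q y -> exists2 p, p \in sol_index & y = sol p.
Proof.
rewrite [y]mkpt_eta; set l := pt_env y 0; set x := fun j => _.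
move=> /is_zero_Qsys[zero_eq zero_lin].
have [i x_i] : exists i, x i ^+ K.+1 != beta i.
  apply/existsP; rewrite -negb_forall; apply/negP => /forallP all_root.
  by have /eqP := generic (fun j => eqP (all_root j)).
have l_mu : l = mu i.
  by apply/eqP; have /eqP := zero_eq i; rewrite mulf_eq0 !subr_eq0 (negbTE x_i) orbF.
have x_root j : j != i -> x j ^+ K.+1 = beta j.
  move=> ji; apply/eqP; have /eqP := zero_eq j; rewrite mulf_eq0 !subr_eq0 l_mu.
  by rewrite (inj_eq mu_inj) eq_sym (negbTE ji).
have [a x_a] : exists a : 'I_n -> 'I_K.+1,
    forall j, j != i -> x j = root (beta j) (a j).
  apply: (@fin_all_exists _ (fun=> 'I_K.+1)
                          (fun j b => j != i -> x j = root (beta j) b)).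
  move=> j; case: (eqVneq j i) => [_|ji]; first by exists ord0.
  by have [b ->] := nth_rootP prim_z (beta_neq0 j) (x_root j ji); exists b.
exists (i, [ffun j => if j == i then ord0 else a j]); first by rewrite inE /= ffunE eqxx.
rewrite /sol /= -l_mu; apply: eq_mkpt => j; rewrite /sol_x.
have root_x k :
    k != i -> root (beta k) ([ffun j => if j == i then ord0 else a j] k) = x k.
  by move=> /negbTE ki; rewrite ffunE ki x_a ?ki.
case: eqVneq => [->|ji]; last by rewrite root_x.
apply/eqP; under eq_bigr => k ki do rewrite root_x //.
by rewrite -solve_lin_eq // zero_lin.
Qed.

Lemma sol_jacobian_unit p : jacobian Q (sol p) \in unitmx.
Proof.
case: p => i f; rewrite unitmxE unitfE; apply/negP => /det0P[v v_neq0 vJ].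
have col t : (v *m jacobian Q (mkpt (mu i) (sol_x i f))) 0 t = 0 by rewrite vJ mxE.
have v_i : v 0 (widen_ord (leqnSn n) i) = 0.
  have := col 0; rewrite mulmx_jacobian_lam (bigD1 i) //= big1 => [|j ji]; last first.
    by rewrite sol_x_root // subrr mulr0.
  rewrite addr0 => /eqP; rewrite mulf_eq0 subr_eq0 (negbTE (sol_x_not_root i f)).
  by rewrite orbF => /eqP.
have v_last : v 0 ord_max = 0.
  have := col (lift ord0 i); rewrite mulmx_jacobian_x subrr mul0r mulr0 add0r.
  by move/eqP; rewrite mulf_eq0 (negbTE (c_neq0 i)) orbF => /eqP.
have v_j j : j != i -> v 0 (widen_ord (leqnSn n) j) = 0.
  move=> ji; have := col (lift ord0 j); rewrite mulmx_jacobian_x v_last mul0r addr0.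
  have x_j_neq0 : sol_x i f j != 0.
    by apply: contra (beta_neq0 j) => /eqP x0; rewrite -(sol_x_root f ji) x0 expr0n.
  move/eqP; rewrite !mulf_eq0 subr_eq0 (inj_eq mu_inj) [i == j]eq_sym (negbTE ji).
  by rewrite pnatr_eq0 expf_eq0 (negbTE x_j_neq0) andbF /= !orbF => /eqP.
apply/(negP v_neq0)/eqP/rowP => t; rewrite mxE; case: (unliftP ord_max t) => [j ->|->] //.
rewrite (_ : lift ord_max j = widen_ord (leqnSn n) j); last first.
  by apply: val_inj; rewrite /= /bump leqNgt ltn_ord.
by case: (eqVneq j i) => [->|/v_j].
Qed.

Lemma Qsys_solutions : exists s : seq 'rV[C]_n.+1,
  [/\ uniq s, size s = (n * K.+1 ^ n.-1)%N,
      forall y, is_zero Q y <-> y \in s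
    & forall y, y \in s -> jacobian Q y \in unitmx].
Proof.
exists [seq sol p | p <- enum sol_index]; split.
- by rewrite map_inj_in_uniq ?enum_uniq // => p q; rewrite !mem_enum; apply: sol_inj.
- by rewrite size_map -cardE card_dep_pairs.
- move=> y; split => [/zero_is_sol[p p_sol ->]|/mapP[p _ ->]]; last exact: is_zero_sol.
  by apply: map_f; rewrite mem_enum.
- by move=> _ /mapP[p _ ->]; apply: sol_jacobian_unit.
Qed.

End GenericSolutions.

Theorem mainTheorem5 (C : numClosedFieldType) (n m : nat) :
  (1 <= n)%N -> (2 <= m)%N ->
  [/\
   exists P : pexpr C,
     (exists (mu0 beta0 c0 : 'I_n -> C) (d0 : C),
        peval (param_env mu0 beta0 c0 d0) P != 0) /\
     forall (mu beta c : 'I_n -> C) (d : C),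
       (forall i, mu i != 0) -> (forall i, beta i != 0) ->
       (forall i, c i != 0) -> d != 0 -> injective mu ->
       peval (param_env mu beta c d) P != 0 ->
       exists s : seq 'rV[C]_n.+1,
         [/\ uniq s, size s = (n * (m - 1) ^ (n - 1))%N,
             (forall z, is_zero (Qsys m mu beta c d) z <-> z \in s)
           & forall z, z \in s -> jacobian (Qsys m mu beta c d) z \in unitmx],
   (forall (mu beta c : 'I_n -> C) (d : C),
       bezout2 (Qsys m mu beta c d) lam_group (x_group n) 1 n
       = (n * (m - 1) ^ (n - 1))%N%:Z)
  & (forall (A B : {ffun 'I_m -> 'I_n} -> C) (k : nat) (a : 'I_n -> C) (b : C),
       (1 <= k <= m)%N ->
       bezout2 (Gsys A B k a b) lam_group (x_group n) 1 n
       = (n * (m - 1) ^ (n - 1))%N%:Z)].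
Proof.
move=> n_gt0; case: m => [|[|K]] // _; split; last 2 first.
- by move=> *; apply: bezout2_Qsys.
- by move=> *; apply: bezout2_Gsys.
exists (norm_expr C n K); split.
  exists (fun=> 0), (fun=> 1), (fun=> 0), 1.
  by rewrite peval_norm_expr det_norm_mx_unit oner_neq0.
move=> mu beta c d _ beta_neq0 c_neq0 _ mu_inj; rewrite peval_norm_expr => det_neq0.
have [z prim_z] := prim_root_exists C (ltn0Sn K).
rewrite !subn1 /=; apply: Qsys_solutions prim_z beta_neq0 c_neq0 mu_inj _ => r r_root.
by apply: contra_neq det_neq0; apply: det_norm_mx_eq0 r_root.
Qed.
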